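(* Consider a scenario submodular cover instance: finite ground set $U$, monotone submodular $f:2^U\to\mathbb{Z}_{\ge 0}$ with $Q:=f(U)$, items $\mathbf{X}_1,\dots,\mathbf{X}_m$ with costs $c_e>0$ and explicit joint distribution with $s$ scenarios (scenario $\omega$ has probability $p_\omega>0$, and in it $\mathbf{X}_e$ realizes to $X_e(\omega)\in U$), where in every scenario the realizations of all items cover $f$. Given parameters $\delta,\varepsilon\in(0,1)$, the scenario submodular partial cover problem asks to probe items with realization $R\subseteq U$ until either (i) the number of scenarios compatible with the observed realizations is less than $\delta s$, or (ii) $f(R)>Q(1-\varepsilon)$. There is a non-adaptive algorithm for this problem with expected cost $O\!\left(\frac{1}{\delta}\left(\ln\frac{1}{\delta}+\ln\frac{1}{\varepsilon}\right)\right)$ times the expected cost of an optimal adaptive solution for the (full) scenario submodular cover problem.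
   Context: A scenario $\omega$ is compatible with the observed realizations if every probed item $\mathbf{X}_e$ has realized to $X_e(\omega)$. A non-adaptive algorithm fixes an ordering of all items before observing any realization and then probes items in this order until the stopping condition holds; its cost is the expected total cost of probed items. An adaptive solution for full cover chooses each next item based on all realizations observed so far and must reach $f(S)=Q$ with probability one; the optimal one has minimum expected cost. *)

From HB Require Import structures.
From mathcomp Require Import all_boot all_order all_algebra.
From mathcomp Require Import all_classical all_reals all_analysis.
Set Implicit Arguments. Unset Strict Implicit. Unset Printing Implicit Defensive.
Import Order.TTheory GRing.Theory Num.Theory.
Local Open Scope ring_scope.

Section ScenarioSubmodularCover.
Variables (R : realType) (U : finType) (m s : nat).
Variables (f : {set U} -> nat) (c : 'I_m -> R) (p : 'I_s -> R)
          (X : 'I_s -> 'I_m -> U).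

Definition monotone_setfun := forall A B : {set U}, A \subset B -> (f A <= f B)%N.
Definition submodular_setfun :=
  forall A B : {set U}, (f (A :|: B) + f (A :&: B) <= f A + f B)%N.

Definition Qval : nat := f [set: U].

Definition scenarios_cover := forall w : 'I_s, f [set X w e | e : 'I_m] = Qval.

Section NonAdaptive.
Variables (sigma : 'I_m -> 'I_m) (delta eps : R).

Definition na_real (w : 'I_s) (k : nat) : {set U} :=
  [set X w (sigma i) | i : 'I_m & (i < k)%N].

Definition na_compat (w : 'I_s) (k : nat) : {set 'I_s} :=
  [set w' : 'I_s | [forall i : 'I_m, (i < k)%N ==> (X w' (sigma i) == X w (sigma i))]].

Definition na_stop (w : 'I_s) (k : nat) : bool :=
  ((#|na_compat w k|)%:R < delta * s%:R) || ((Qval%:R) * (1 - eps) < (f (na_real w k))%:R).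

(* number of items probed: first k (<= m) where the stopping condition holds
   (m if it never holds, i.e. all items are probed) *)
Definition na_stoptime (w : 'I_s) : nat := find (na_stop w) (iota 0 m).

Definition na_cost (w : 'I_s) : R := \sum_(i < m | (i < na_stoptime w)%N) c (sigma i).

Definition na_expected_cost : R := \sum_(w < s) p w * na_cost w.
End NonAdaptive.

Definition history := seq ('I_m * U).
Definition policy := history -> 'I_m.

Fixpoint ad_hist (pi : policy) (w : 'I_s) (k : nat) : history :=
  match k with
  | 0 => [::]
  | k'.+1 => let h := ad_hist pi w k' in rcons h (pi h, X w (pi h))
  end.

Definition ad_real (pi : policy) (w : 'I_s) (k : nat) : {set U} :=
  [set u | u \in map snd (ad_hist pi w k)].

Definition ad_cost (pi : policy) (w : 'I_s) (k : nat) : R :=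
  \sum_(e <- map fst (ad_hist pi w k)) c e.

(* tau w is the first time the policy reaches f(S) = Q in scenario w;
   existence of such tau for every scenario = full cover with probability one *)
Definition full_cover_stoptime (pi : policy) (tau : 'I_s -> nat) :=
  forall w : 'I_s, f (ad_real pi w (tau w)) = Qval /\
    (forall k, (k < tau w)%N -> f (ad_real pi w k) <> Qval).

Definition ad_expected_cost (pi : policy) (tau : 'I_s -> nat) : R :=
  \sum_(w < s) p w * ad_cost pi w (tau w).
End ScenarioSubmodularCover.

From HB Require Import structures.
From mathcomp Require Import all_boot all_order all_algebra.
From mathcomp Require Import all_classical all_reals all_analysis.
Set Implicit Arguments. Unset Strict Implicit. Unset Printing Implicit Defensive.
Import Order.TTheory GRing.Theory Num.Theory.
Local Open Scope ring_scope.

(* Fix an adaptive policy [pi] and call a node of its decision tree large when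
   at least [delta * s] scenarios reach it.  Order the items by the least
   cumulative cost at which [pi] probes them at a large node.  In a scenario
   [w], let [T] be the cost [pi] spends before its path leaves the large
   nodes (or covers).  Every item probed on that stretch has key at most [T],
   so once the order has bought all items of key at most [T], either the
   compatible scenarios all share the history of [w] down to its first small
   node (stop (i)), or the realizations seen contain all those [pi] saw
   before covering (stop (ii)).  Each item of key at most [T] is bought within
   budget [T] by at least [delta * s] scenarios, whereas each scenario buys
   items of total cost at most [T] within that budget; double counting shows
   that these items cost at most [T / delta].  This yields the ratio
   [1 / delta] scenario by scenario, with no logarithmic loss, for an order
   that depends on [pi]; the order of least expected cost is then at least
   as good against every [pi]. *)

Lemma find_iota_leq (P : pred nat) n k :
  (k <= n)%N -> P k -> (find P (iota 0 n) <= k)%N.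
Proof.
move=> kn Pk; rewrite leqNgt; apply/negP => lt_k.
have k_lt_n : (k < n)%N.
  by apply: leq_trans lt_k _; rewrite -[leqRHS](size_iota 0) find_size.
by have := before_find 0 lt_k; rewrite nth_iota // add0n Pk.
Qed.

Lemma before_find_iota (P : pred nat) n j :
  (j < find P (iota 0 n))%N -> ~~ P j.
Proof.
move=> lt_j; have j_lt_n : (j < n)%N.
  by apply: leq_trans lt_j _; rewrite -[leqRHS](size_iota 0) find_size.
by have := before_find 0 lt_j; rewrite nth_iota // add0n => ->.
Qed.

Lemma nth_find_iota (P : pred nat) n :
  (find P (iota 0 n) < n)%N -> P (find P (iota 0 n)).
Proof.
move=> lt_n; have hasP : has P (iota 0 n) by rewrite has_find size_iota.
by have := nth_find 0 hasP; rewrite nth_iota // add0n.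
Qed.

Lemma before_find_gt_sorted d (T : orderType d) (A : Type) (key : A -> T)
    (t : T) (s : seq A) x0 i :
  sorted (fun a b => (key a <= key b)%O) s -> (i < size s)%N ->
  (i < find (fun a => (t < key a)%O) s)%N = (key (nth x0 s i) <= t)%O.
Proof.
move=> s_sorted i_lt; apply/idP/idP => [/(before_find x0)/negbT|key_le].
  by rewrite -leNgt.
rewrite ltnNge; apply/negP => find_le.
have has_gt : has (fun a => (t < key a)%O) s.
  by rewrite has_find (leq_ltn_trans find_le).
have key_mono := sorted_leq_nth (fun y x z => @le_trans _ _ (key y) (key x) (key z))
  (fun a => lexx (key a)) x0 s_sorted.
have := key_mono (find (fun a => (t < key a)%O) s) i; rewrite !inE -has_find.
move=> /(_ has_gt i_lt find_le) le_find_i.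
by have := lt_le_trans (nth_find x0 has_gt) (le_trans le_find_i key_le); rewrite ltxx.
Qed.

Lemma exists_min_bijection d (O : orderType d) (T : finType) (F : (T -> T) -> O) :
  exists2 g : T -> T, bijective g & forall g', injective g' -> (F g <= F g')%O.
Proof.
have id_inj : injectiveb [ffun x : T => x] by apply/injectiveP => x y; rewrite !ffunE.
case: (@arg_minP _ _ _ _ (fun g : {ffun T -> T} => injectiveb g) (fun g => F g) id_inj).
move=> g /injectiveP g_inj g_min.
exists g; first exact: injF_bij.
move=> g' g'_inj; pose gf : {ffun T -> T} := finfun g'.
have gfE : fun_of_fin gf = g' by apply: funext => x; rewrite ffunE.
by have := g_min gf; rewrite -/gf gfE; apply; apply/injectiveP.
Qed.

Section RealSums.
Variable R : realType.

Lemma ler_sum_sub (I : finType) (P Q : pred I) (F : I -> R) :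
  (forall i, 0 <= F i) -> (forall i, P i -> Q i) ->
  \sum_(i | P i) F i <= \sum_(i | Q i) F i.
Proof.
move=> F_ge0 PQ; rewrite [leRHS](bigID P) /= [X in _ <= X + _](eq_bigl P).
  by rewrite lerDl sumr_ge0.
by move=> i; case: (boolP (P i)) => [/PQ ->|]; rewrite ?andbF.
Qed.

Lemma sum_imset_le (I J : finType) (h : I -> J) (A : {pred I}) (F : J -> R) :
  (forall j, 0 <= F j) -> \sum_(j in h @: A) F j <= \sum_(i in A) F (h i).
Proof.
move=> F_ge0; rewrite (partition_big_imset h); apply: ler_sum => j /imsetP [i Ai ->].
by rewrite (bigD1 i) /= ?Ai ?eqxx // lerDl sumr_ge0.
Qed.

Lemma sum_mul_card_rel (I J : finType) (F : I -> R) (r : I -> J -> bool) :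
  \sum_i F i * #|[set j | r i j]|%:R = \sum_j \sum_(i | r i j) F i.
Proof.
under eq_bigr do rewrite mulr_natr -sumr_const.
rewrite (exchange_big_dep xpredT) //=; apply: eq_bigr => j _.
by apply: eq_bigl => i; rewrite inE.
Qed.

End RealSums.

Section AdaptiveRun.
Variables (R : realType) (U : finType) (m s : nat).
Variables (c : 'I_m -> R) (X : 'I_s -> 'I_m -> U) (pi : policy U m).

Local Notation hist := (ad_hist X pi).
Local Notation acost := (ad_cost c X pi).

Lemma ad_costS w n : acost w n.+1 = acost w n + c (pi (hist w n)).
Proof. by rewrite /ad_cost /= map_rcons big_rcons. Qed.

Lemma ad_cost_sum w n : acost w n = \sum_(j < n) c (pi (hist w j)).
Proof.
elim: n => [|n IHn]; first by rewrite /ad_cost big_nil big_ord0.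
by rewrite ad_costS big_ord_recr IHn.
Qed.

Lemma ad_cost_eq_hist w w' n : hist w n = hist w' n -> acost w n.+1 = acost w' n.+1.
Proof. by move=> eq_hist; rewrite !ad_costS /ad_cost eq_hist. Qed.

Lemma mem_ad_real w n u :
  u \in ad_real X pi w n -> exists2 j, (j < n)%N & u = X w (pi (hist w j)).
Proof.
rewrite inE => /mapP [x]; elim: n => [|n IHn] //=.
rewrite mem_rcons inE => /orP [/eqP -> ->|/IHn hx /hx [j lt_jn ->]]; first by exists n.
by exists j; first exact: ltnW.
Qed.

Hypothesis c_ge0 : forall e, 0 <= c e.

Lemma ad_cost_ge0 w n : 0 <= acost w n.
Proof. by rewrite ad_cost_sum sumr_ge0. Qed.

Lemma ad_cost_homo w : {homo acost w : a b / (a <= b)%N >-> a <= b}.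
Proof.
move=> a b /subnK <-; elim: (b - a)%N => [|n IHn] //.
by rewrite addSn ad_costS (le_trans IHn) // lerDl.
Qed.

Lemma sum_within_budget w n (T : R) : 0 <= T ->
  \sum_(j < n | acost w j.+1 <= T) c (pi (hist w j)) <= T.
Proof.
move=> T_ge0; elim: n => [|n IHn]; first by rewrite big_ord0.
rewrite big_mkcond big_ord_recr /= -big_mkcond /=.
case: ifP => [le_T|_]; last by rewrite addr0.
rewrite (eq_bigl xpredT) -?ad_cost_sum -?ad_costS // => j.
by rewrite (le_trans _ le_T) // ad_cost_homo // ltnS ltnW.
Qed.

Definition budget_items (T : R) w n : {set 'I_m} :=
  (fun j : 'I_n => pi (hist w j)) @: [set j : 'I_n | acost w j.+1 <= T].

Lemma sum_budget_items (T : R) w n : 0 <= T -> \sum_(e in budget_items T w n) c e <= T.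
Proof.
move=> T_ge0; apply: le_trans (sum_imset_le _ _ c_ge0) _.
by under eq_bigl do rewrite inE; exact: sum_within_budget.
Qed.

End AdaptiveRun.

Section LargeNodes.
Variables (R : realType) (U : finType) (m s : nat).
Variables (c : 'I_m -> R) (X : 'I_s -> 'I_m -> U) (pi : policy U m).
Variables (delta : R) (tau : 'I_s -> nat).

Local Notation hist := (ad_hist X pi).

Definition hist_class w j : {set 'I_s} := [set w' | hist w' j == hist w j].

Definition drop_time w : nat :=
  find (fun j => #|hist_class w j|%:R < delta * s%:R) (iota 0 (tau w)).

Lemma drop_time_le w : (drop_time w <= tau w)%N.
Proof. by rewrite /drop_time -[leqRHS](size_iota 0) find_size. Qed.

Lemma hist_class_large w j : (j < drop_time w)%N -> delta * s%:R <= #|hist_class w j|%:R.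
Proof. by move/before_find_iota; rewrite -leNgt. Qed.

Lemma hist_class_small_at_drop w :
  (drop_time w < tau w)%N -> #|hist_class w (drop_time w)|%:R < delta * s%:R.
Proof. exact: nth_find_iota. Qed.

Section Stopping.
Variables (f : {set U} -> nat) (eps : R) (sigma : 'I_m -> 'I_m).
Hypotheses (f_mono : monotone_setfun f) (Q_gt0 : (0 < Qval f)%N) (eps_gt0 : 0 < eps).
Hypothesis tau_cover : full_cover_stoptime f X pi tau.
Variables (w : 'I_s) (k : nat).
Hypothesis probed : forall j, (j < drop_time w)%N ->
  exists2 i : 'I_m, (i < k)%N & sigma i = pi (hist w j).

Lemma na_compat_sub_hist_class : na_compat X sigma w k \subset hist_class w (drop_time w).
Proof.
apply/fintype.subsetP => w'; rewrite !inE => /forallP agree; apply/eqP.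
suff agree_upto j : (j <= drop_time w)%N -> hist w' j = hist w j by exact: agree_upto.
elim: j => [|j IHj] // lt_j; have [i lt_ik sigma_i] := probed lt_j.
have := agree i; rewrite lt_ik sigma_i /= => /eqP X_eq.
by rewrite /= IHj ?X_eq // ltnW.
Qed.

Lemma ad_real_sub_na_real : ad_real X pi w (drop_time w) \subset na_real X sigma w k.
Proof.
apply/fintype.subsetP => u /mem_ad_real [j lt_j ->].
have [i lt_ik <-] := probed lt_j.
by apply/imsetP; exists i; rewrite ?inE.
Qed.

Lemma na_stop_of_probed : na_stop f X sigma delta eps w k.
Proof.
rewrite /na_stop; have [lt_tau|ge_tau] := ltnP (drop_time w) (tau w).
  apply/orP; left; apply: le_lt_trans (hist_class_small_at_drop lt_tau).
  by rewrite ler_nat subset_leq_card // na_compat_sub_hist_class.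
apply/orP; right.
have drop_tau : drop_time w = tau w by apply/eqP; rewrite eqn_leq drop_time_le.
have [covered _] := tau_cover w.
have Q_le : (Qval f <= f (na_real X sigma w k))%N.
  by rewrite -covered -drop_tau f_mono // ad_real_sub_na_real.
apply: (@lt_le_trans _ _ (Qval f)%:R); last by rewrite ler_nat.
by rewrite gtr_pMr ?ltr0n // gtrBl.
Qed.

End Stopping.
End LargeNodes.

Section KeyOrder.
Variables (R : realType) (U : finType) (m s : nat).
Variables (c : 'I_m -> R) (X : 'I_s -> 'I_m -> U) (pi : policy U m).
Variables (delta : R) (tau : 'I_s -> nat).
Hypothesis c_ge0 : forall e, 0 <= c e.

Local Notation hist := (ad_hist X pi).
Local Notation acost := (ad_cost c X pi).
Local Notation drop_time := (drop_time X pi delta tau).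

Definition horizon : nat := \max_(w < s) tau w.

Definition key_default : R := 1 + \sum_(w < s) acost w (tau w).

(* Items never probed at a large node get [key_default], which exceeds every
   budget [T] considered below. *)
Definition key (e : 'I_m) : R :=
  \big[Order.min/key_default]_(x : 'I_s * 'I_horizon |
      (x.2 < drop_time x.1)%N && (pi (hist x.1 x.2) == e)) acost x.1 x.2.+1.

Lemma key_le w j (lt_j : (j < drop_time w)%N) : key (pi (hist w j)) <= acost w j.+1.
Proof.
have lt_jh : (j < horizon)%N.
  by apply: leq_trans lt_j (leq_trans (drop_time_le _ _ _ _ _) (leq_bigmax w)).
by apply: (@bigmin_le_cond _ _ _ _ (w, Ordinal lt_jh)); rewrite /= lt_j eqxx.
Qed.

Lemma key_le_witness e (T : R) : T < key_default -> key e <= T ->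
  exists w (j : 'I_horizon),
    [/\ (j < drop_time w)%N, pi (hist w j) = e & acost w j.+1 <= T].
Proof.
move=> lt_T /bigmin_leP [le_default|[[w j] /= /andP [lt_j /eqP <-] le_T]].
  by move: (lt_le_trans lt_T le_default); rewrite ltxx.
by exists w, j.
Qed.

Definition budget_scenarios (T : R) e : {set 'I_s} :=
  [set w' | e \in budget_items c X pi T w' horizon].

Lemma card_budget_scenarios_ge e (T : R) : T < key_default -> key e <= T ->
  delta * s%:R <= #|budget_scenarios T e|%:R.
Proof.
move=> lt_T /(key_le_witness lt_T) [w [j [lt_j hist_e le_T]]].
apply: le_trans (hist_class_large lt_j) _; rewrite ler_nat subset_leq_card //.
apply/fintype.subsetP => w'; rewrite !inE => /eqP eq_hist.
by apply/imsetP; exists j; rewrite ?inE ?(ad_cost_eq_hist c eq_hist) ?eq_hist.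
Qed.

Lemma sum_cheap_items (T : R) : 0 <= T -> T < key_default ->
  (\sum_(e | key e <= T) c e) * (delta * s%:R) <= s%:R * T.
Proof.
move=> T_ge0 lt_T; rewrite mulr_suml.
apply: (@le_trans _ _ (\sum_e c e * #|budget_scenarios T e|%:R)).
  rewrite [leRHS](bigID (fun e => key e <= T)) /= -[leLHS]addr0.
  apply: lerD; last by apply: sumr_ge0 => e _; rewrite mulr_ge0.
  by apply: ler_sum => e le_T; rewrite ler_wpM2l // card_budget_scenarios_ge.
rewrite /budget_scenarios sum_mul_card_rel.
rewrite [leRHS](_ : _ = \sum_(w' < s) T); last by rewrite sumr_const card_ord mulr_natl.
by apply: ler_sum => w' _; exact: sum_budget_items.
Qed.

Definition key_tuple : m.-tuple 'I_m :=
  sort_tuple (fun a b => key a <= key b) (ord_tuple m).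

Definition key_order (i : 'I_m) : 'I_m := tnth key_tuple i.

Lemma key_order_inj : injective key_order.
Proof. by apply/tuple_uniqP; rewrite sort_uniq val_ord_tuple enum_uniq. Qed.

Definition key_rank (T : R) : nat := find (fun e => T < key e) key_tuple.

Lemma key_order_prefix (T : R) (i : 'I_m) : (i < key_rank T)%N = (key (key_order i) <= T).
Proof.
rewrite /key_order /key_rank (tnth_nth i) (before_find_gt_sorted T i) ?size_tuple //.
by apply: sort_sorted => a b; exact: le_total.
Qed.

Section KeyOrderBound.
Variables (f : {set U} -> nat) (eps : R).
Hypotheses (f_mono : monotone_setfun f) (Q_gt0 : (0 < Qval f)%N).
Hypotheses (eps_gt0 : 0 < eps) (delta_gt0 : 0 < delta).
Hypothesis tau_cover : full_cover_stoptime f X pi tau.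

Lemma na_cost_key_order w :
  na_cost f c X key_order delta eps w <= delta^-1 * acost w (tau w).
Proof.
set T := acost w (drop_time w).
have T_le : T <= acost w (tau w) by apply: ad_cost_homo; rewrite ?drop_time_le.
have T_lt : T < key_default.
  apply: le_lt_trans T_le _; rewrite /key_default (bigD1 w) //= addrCA ltrDl.
  by rewrite ltr_wpDr // sumr_ge0 // => w' _; exact: ad_cost_ge0.
have probed j : (j < drop_time w)%N ->
    exists2 i : 'I_m, (i < key_rank T)%N & key_order i = pi (hist w j).
  move=> lt_j; have [g _ gK] := injF_bij key_order_inj.
  exists (g (pi (hist w j))); rewrite ?gK // key_order_prefix gK.
  by apply: le_trans (key_le lt_j) _; exact: ad_cost_homo.
have stop_le : (na_stoptime f X key_order delta eps w <= key_rank T)%N.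
  apply: find_iota_leq; last exact: na_stop_of_probed probed.
  by rewrite -[leqRHS](size_tuple key_tuple) find_size.
apply: (@le_trans _ _ (\sum_(i < m | (i < key_rank T)%N) c (key_order i))).
  by apply: ler_sum_sub => // i /leq_trans; apply.
rewrite (eq_bigl _ _ (key_order_prefix T)).
rewrite -(reindex_inj key_order_inj (P := fun e => key e <= T) (F := c)) /=.
have s_gt0 : (0 : R) < s%:R by rewrite ltr0n (leq_ltn_trans _ (ltn_ord w)).
apply: (@le_trans _ _ (delta^-1 * T)); last by rewrite ler_wpM2l // invr_ge0 ltW.
rewrite mulrC ler_pdivlMr // -(ler_pM2r s_gt0) -mulrA [T * _]mulrC.
by apply: sum_cheap_items; rewrite ?ad_cost_ge0.
Qed.

Lemma na_expected_cost_key_order (p : 'I_s -> R) : (forall w, 0 <= p w) ->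
  na_expected_cost f c p X key_order delta eps <= delta^-1 * ad_expected_cost c p X pi tau.
Proof.
move=> p_ge0; rewrite mulr_sumr; apply: ler_sum => w _.
by rewrite mulrCA ler_wpM2l // na_cost_key_order.
Qed.

End KeyOrderBound.
End KeyOrder.

Lemma one_le_ln_inv_sum (R : realType) (delta eps : R) :
  0 < delta <= 1 -> 0 < eps <= 1 -> 1 <= 1 + ln delta^-1 + ln eps^-1.
Proof.
move=> /andP [delta_gt0 delta_le1] /andP [eps_gt0 eps_le1].
by rewrite -addrA lerDl addr_ge0 // ln_ge0 // invf_ge1.
Qed.

Theorem mainTheorem5 (R : realType) :
  exists C : R, 0 < C /\
  forall (U : finType) (m s : nat) (f : {set U} -> nat) (c : 'I_m -> R)
         (p : 'I_s -> R) (X : 'I_s -> 'I_m -> U) (delta eps : R),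
    monotone_setfun f -> submodular_setfun f ->
    (0 < Qval f)%N ->
    (forall e, 0 < c e) ->
    (forall w, 0 < p w) -> \sum_(w < s) p w = 1 ->
    scenarios_cover f X ->
    0 < delta < 1 -> 0 < eps < 1 ->
    exists sigma : 'I_m -> 'I_m, bijective sigma /\
      forall (pi : policy U m) (tau : 'I_s -> nat),
        full_cover_stoptime f X pi tau ->
        na_expected_cost f c p X sigma delta eps <=
          C * (delta^-1 * (1 + ln (delta^-1) + ln (eps^-1)))
            * ad_expected_cost c p X pi tau.
Proof.
exists 1; split=> [|U m s f c p X delta eps f_mono _ Q_gt0 c_gt0 p_gt0 _ _].
  exact: ltr01.
move=> /andP [delta_gt0 delta_lt1] /andP [eps_gt0 eps_lt1].
have c_ge0 e : 0 <= c e by exact: ltW.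
have p_ge0 w : 0 <= p w by exact: ltW.
have [sigma sigma_bij sigma_min] :=
  exists_min_bijection (fun g => na_expected_cost f c p X g delta eps).
exists sigma; split=> // pi tau tau_cover.
have /= /le_trans := sigma_min _ (@key_order_inj _ _ _ _ c X pi delta tau); apply.
have /le_trans := na_expected_cost_key_order c_ge0 f_mono Q_gt0 eps_gt0 delta_gt0 tau_cover p_ge0.
apply.
rewrite mul1r -mulrA ler_wpM2l ?invr_ge0 ?(ltW delta_gt0) // ler_peMl //.
  by apply: sumr_ge0 => w _; rewrite mulr_ge0 ?ad_cost_ge0.
by apply: one_le_ln_inv_sum; rewrite ?delta_gt0 ?eps_gt0 ?(ltW delta_lt1) ?(ltW eps_lt1).
Qed.
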